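(* Let $\mathcal{C},\mathcal{D}$ be direct categories, $F:\mathcal{C}\to\mathcal{D}$ a functor, and $\mathcal{Q}\subseteq\mathcal{D}$ an interval. Then $F^{-1}(\mathcal{Q})$ is a subcategory of $\mathcal{C}$ each of whose connected components is an interval in $\mathcal{C}$, and $F^*(I_{\mathcal{Q}})=I_{\mathcal{Q}}\circ F$ is isomorphic to the direct sum of the interval modules $I_{\mathcal{P}}$ over the connected components $\mathcal{P}$ of $F^{-1}(\mathcal{Q})$.
   Context: A small category is direct if it has no infinite chain of composable non-identity morphisms and no cycle of non-identity morphisms of positive length. An interval in a direct category $\mathcal{C}$ is a nonempty connected subcategory $\mathcal{Q}$ that is convex: whenever $x,y\in\mathcal{Q}$, $\alpha:x\to z$, $\beta:z\to y$ are morphisms of $\mathcal{C}$ and $\beta\circ\alpha$ is a morphism of $\mathcal{Q}$, then $z$, $\alpha$, $\beta$ belong to $\mathcal{Q}$. The interval module $I_{\mathcal{Q}}$ (over a field $k$) takes value $k$ at objects of $\mathcal{Q}$ and $0$ elsewhere, sends morphisms of $\mathcal{Q}$ to the identity and all other morphisms to $0$. $F^{-1}(\mathcal{Q})$ is the subcategory of $\mathcal{C}$ whose objects are those $x$ with $F(x)\in\mathcal{Q}$ and whose morphisms are those $\varphi$ between such objects with $F(\varphi)$ a morphism of $\mathcal{Q}$. *)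

From HB Require Import structures.
From mathcomp Require Import all_boot all_algebra.
From mathcomp Require Import boolp.
From Stdlib Require Import Relations List.

Set Implicit Arguments.
Unset Strict Implicit.
Unset Printing Implicit Defensive.

Import GRing.Theory.
Local Open Scope ring_scope.

Record Cat := {
  Obj : Type;
  Hom : Obj -> Obj -> Type;
  cid : forall x, Hom x x;
  ccomp : forall x y z, Hom y z -> Hom x y -> Hom x z;
  ccomp1f : forall x y (f : Hom x y), ccomp (cid y) f = f;
  ccompf1 : forall x y (f : Hom x y), ccomp f (cid x) = f;
  ccompA : forall x y z w (f : Hom x y) (g : Hom y z) (h : Hom z w),
      ccomp h (ccomp g f) = ccomp (ccomp h g) f
}.
Arguments Hom : clear implicits.
Arguments cid {c} x.
Arguments ccomp {c x y z} _ _.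

Record Functor (C D : Cat) := {
  fobj : Obj C -> Obj D;
  fmor : forall x y, Hom C x y -> Hom D (fobj x) (fobj y);
  fmor_id : forall x, fmor (cid x) = cid (fobj x);
  fmor_comp : forall x y z (f : Hom C x y) (g : Hom C y z),
      fmor (ccomp g f) = ccomp (fmor g) (fmor f)
}.
Arguments fobj {C D} f0 x.
Arguments fmor {C D} f0 {x y} _.

Definition is_identity (C : Cat) (x y : Obj C) (f : Hom C x y) : Prop :=
  exists e : x = y, eq_rect x (Hom C x) (cid x) y e = f.

Definition no_infinite_chain (C : Cat) : Prop :=
  (~ exists (a : nat -> Obj C) (f : forall n, Hom C (a n) (a n.+1)),
        forall n, ~ is_identity (f n)) /\
  (~ exists (a : nat -> Obj C) (f : forall n, Hom C (a n.+1) (a n)),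
        forall n, ~ is_identity (f n)).

Definition no_cycle (C : Cat) : Prop :=
  ~ exists (n : nat) (a : nat -> Obj C) (f : forall i, Hom C (a i) (a i.+1)),
      (0 < n)%N /\ a n = a 0%N /\ forall i, (i < n)%N -> ~ is_identity (f i).

Definition direct (C : Cat) : Prop := no_infinite_chain C /\ no_cycle C.

Record SubCol (C : Cat) := {
  sobj : Obj C -> Prop;
  smor : forall x y, Hom C x y -> Prop
}.
Arguments sobj {C} s x.
Arguments smor {C} s {x y} _.

Definition is_subcategory (C : Cat) (S : SubCol C) : Prop :=
  (forall x y (f : Hom C x y), smor S f -> sobj S x /\ sobj S y) /\
  (forall x, sobj S x -> smor S (cid x)) /\
  (forall x y z (f : Hom C x y) (g : Hom C y z),
      smor S f -> smor S g -> smor S (ccomp g f)).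

Definition zz (C : Cat) (S : SubCol C) : relation (Obj C) :=
  clos_refl_sym_trans (Obj C) (fun a b => exists f : Hom C a b, smor S f).

Definition connected (C : Cat) (S : SubCol C) : Prop :=
  (exists x, sobj S x) /\
  (forall x y, sobj S x -> sobj S y -> zz S x y).

Definition convex (C : Cat) (S : SubCol C) : Prop :=
  forall x y z (a : Hom C x z) (b : Hom C z y),
    sobj S x -> sobj S y -> smor S (ccomp b a) ->
    sobj S z /\ smor S a /\ smor S b.

Definition is_interval (C : Cat) (S : SubCol C) : Prop :=
  is_subcategory S /\ connected S /\ convex S.

Definition component (C : Cat) (S : SubCol C) (x0 : Obj C) : SubCol C :=
  {| sobj := fun y => sobj S y /\ zz S x0 y;
     smor := fun y z (f : Hom C y z) => smor S f /\ zz S x0 y |}.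

Definition components (C : Cat) (S : SubCol C) : Type :=
  { P : SubCol C | exists x, sobj S x /\ P = component S x }.

Definition preimage (C D : Cat) (F : Functor C D) (Q : SubCol D) : SubCol C :=
  {| sobj := fun x => sobj Q (fobj F x);
     smor := fun x y (f : Hom C x y) =>
               sobj Q (fobj F x) /\ sobj Q (fobj F y) /\ smor Q (fmor F f) |}.

Definition fin_supp (k : fieldType) (I : Type) (V : I -> lmodType k)
    (f : forall i, V i) : Prop :=
  exists s : list I, forall i, f i <> 0 -> List.In i s.

Record dsum (k : fieldType) (I : Type) (V : I -> lmodType k) := DSum {
  dsum_fun :> forall i, V i;
  dsum_supp : fin_supp dsum_fun
}.

Lemma dsum_eq (k : fieldType) (I : Type) (V : I -> lmodType k)
    (f g : dsum V) : (forall i, f i = g i) -> f = g.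
Proof.
case: f g => f hf [g hg] /= H.
have E : f = g by apply: functional_extensionality_dep.
by subst g; congr DSum; apply: Prop_irrelevance.
Qed.

HB.instance Definition _ (k : fieldType) (I : Type) (V : I -> lmodType k) :=
  gen_eqMixin (dsum V).
HB.instance Definition _ (k : fieldType) (I : Type) (V : I -> lmodType k) :=
  gen_choiceMixin (dsum V).

Definition dsum_zero (k : fieldType) (I : Type) (V : I -> lmodType k) : dsum V.
Proof. by exists (fun i => 0); exists nil => i; case. Defined.

Definition dsum_add (k : fieldType) (I : Type) (V : I -> lmodType k)
  (f g : dsum V) : dsum V.
Proof.
exists (fun i => f i + g i).
case: (dsum_supp f) => s hs; case: (dsum_supp g) => t ht.
exists (s ++ t) => i hi; apply/in_or_app.
case: (boolP (f i == 0)) => [/eqP f0|/eqP fn0]; last by left; apply: hs.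
by right; apply: ht => g0; apply: hi; rewrite f0 g0 addr0.
Defined.

Definition dsum_opp (k : fieldType) (I : Type) (V : I -> lmodType k)
  (f : dsum V) : dsum V.
Proof.
exists (fun i => - f i).
case: (dsum_supp f) => s hs; exists s => i hi; apply: hs => f0; apply: hi.
by rewrite f0 oppr0.
Defined.

Definition dsum_scale (k : fieldType) (I : Type) (V : I -> lmodType k)
  (a : k) (f : dsum V) : dsum V.
Proof.
exists (fun i => a *: f i).
case: (dsum_supp f) => s hs; exists s => i hi; apply: hs => f0; apply: hi.
by rewrite f0 scaler0.
Defined.


Lemma dsum_addA (k : fieldType) (I : Type) (V : I -> lmodType k) :
  associative (@dsum_add k I V).
Proof. by move=> f g h; apply: dsum_eq => i /=; rewrite addrA. Qed.
Lemma dsum_addC (k : fieldType) (I : Type) (V : I -> lmodType k) :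
  commutative (@dsum_add k I V).
Proof. by move=> f g; apply: dsum_eq => i /=; rewrite addrC. Qed.
Lemma dsum_add0 (k : fieldType) (I : Type) (V : I -> lmodType k) :
  left_id (@dsum_zero k I V) (@dsum_add k I V).
Proof. by move=> f; apply: dsum_eq => i /=; rewrite add0r. Qed.
Lemma dsum_addN (k : fieldType) (I : Type) (V : I -> lmodType k) :
  left_inverse (@dsum_zero k I V) (@dsum_opp k I V) (@dsum_add k I V).
Proof. by move=> f; apply: dsum_eq => i /=; rewrite addNr. Qed.

HB.instance Definition _ (k : fieldType) (I : Type) (V : I -> lmodType k) :=
  GRing.isZmodule.Build (dsum V) (@dsum_addA k I V) (@dsum_addC k I V)
    (@dsum_add0 k I V) (@dsum_addN k I V).

Lemma dsum_scaleA (k : fieldType) (I : Type) (V : I -> lmodType k) a b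
  (f : dsum V) : dsum_scale a (dsum_scale b f) = dsum_scale (a * b) f.
Proof. by apply: dsum_eq => i /=; rewrite scalerA. Qed.
Lemma dsum_scale1 (k : fieldType) (I : Type) (V : I -> lmodType k) :
  left_id 1 (@dsum_scale k I V).
Proof. by move=> f; apply: dsum_eq => i /=; rewrite scale1r. Qed.
Lemma dsum_scaleDr (k : fieldType) (I : Type) (V : I -> lmodType k) :
  right_distributive (@dsum_scale k I V) +%R.
Proof. by move=> a f g; apply: dsum_eq => i /=; rewrite scalerDr. Qed.
Lemma dsum_scaleDl (k : fieldType) (I : Type) (V : I -> lmodType k)
  (f : dsum V) : {morph (fun a => @dsum_scale k I V a f) : a b / a + b}.
Proof. by move=> a b; apply: dsum_eq => i /=; rewrite scalerDl. Qed.

HB.instance Definition _ (k : fieldType) (I : Type) (V : I -> lmodType k) :=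
  GRing.Zmodule_isLmodule.Build k (dsum V) (@dsum_scaleA k I V)
    (@dsum_scale1 k I V) (@dsum_scaleDr k I V) (@dsum_scaleDl k I V).

(* Data of a C-module: a k-vector space at each object and a k-linear map
   for each morphism. (Functoriality is not part of this record; it is not
   needed to state isomorphisms, and all modules below are functorial.) *)
Record ModData (k : fieldType) (C : Cat) := {
  mspace : Obj C -> lmodType k;
  mmap : forall x y, Hom C x y -> mspace x -> mspace y;
  mmap_lin : forall x y (f : Hom C x y), linear (mmap f)
}.
Arguments mspace {k C} m x.
Arguments mmap {k C} m {x y} _ _.
Arguments mmap_lin {k C} m {x y} _.

Definition is_functorial (k : fieldType) (C : Cat) (M : ModData k C) : Prop :=
  (forall x v, mmap M (cid x) v = v) /\
  (forall x y z (f : Hom C x y) (g : Hom C y z) v,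
      mmap M (ccomp g f) v = mmap M g (mmap M f v)).

Definition mod_iso (k : fieldType) (C : Cat) (M N : ModData k C) : Prop :=
  exists eta : forall x, mspace M x -> mspace N x,
    (forall x, linear (eta x)) /\
    (forall x, bijective (eta x)) /\
    (forall x y (f : Hom C x y) v, eta y (mmap M f v) = mmap N f (eta x v)).

(* Interval (indicator) module I_Q: k (= 'rV[k]_1) at objects of Q, 0
   (= 'rV[k]_0) elsewhere; identity on morphisms of Q, 0 on the others. *)
Definition ind_space (k : fieldType) (C : Cat) (Q : SubCol C) (x : Obj C)
  : lmodType k := 'rV[k]_(nat_of_bool `[< sobj Q x >]).

Definition ind_map (k : fieldType) (C : Cat) (Q : SubCol C) (x y : Obj C)
  (f : Hom C x y) (v : ind_space k Q x) : ind_space k Q y :=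
  v *m (if `[< smor Q f >] then pid_mx 1 else 0).

Lemma ind_map_lin (k : fieldType) (C : Cat) (Q : SubCol C) (x y : Obj C)
  (f : Hom C x y) : linear (@ind_map k C Q x y f).
Proof. by move=> a u v; rewrite /ind_map mulmxDl scalemxAl. Qed.

Definition interval_module (k : fieldType) (C : Cat) (Q : SubCol C)
  : ModData k C :=
  {| mspace := ind_space k Q; mmap := @ind_map k C Q;
     mmap_lin := @ind_map_lin k C Q |}.

Definition pullback (k : fieldType) (C D : Cat) (F : Functor C D)
  (M : ModData k D) : ModData k C :=
  {| mspace := fun x => mspace M (fobj F x);
     mmap := fun x y f => mmap M (fmor F f);
     mmap_lin := fun x y f => mmap_lin M (fmor F f) |}.

Lemma lin_zero (k : fieldType) (U V : lmodType k) (g : U -> V) :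
  linear g -> g 0 = 0.
Proof.
move=> lg; have h := lg 1 0 0; rewrite !scale1r addr0 in h.
by apply: (@addrI _ (g 0)); rewrite addr0 -h.
Qed.

Definition dsum_map (k : fieldType) (C : Cat) (I : Type)
  (M : I -> ModData k C) (x y : Obj C) (f : Hom C x y)
  (v : dsum (fun i => mspace (M i) x)) : dsum (fun i => mspace (M i) y).
Proof.
exists (fun i => mmap (M i) f (v i)).
case: (dsum_supp v) => s hs; exists s => i hi; apply: hs => v0; apply: hi.
by rewrite v0 (lin_zero (mmap_lin (M i) f)).
Defined.

Lemma dsum_map_lin (k : fieldType) (C : Cat) (I : Type)
  (M : I -> ModData k C) (x y : Obj C) (f : Hom C x y) :
  linear (@dsum_map k C I M x y f).
Proof.
move=> a u v; apply: dsum_eq => i /=.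
exact: (mmap_lin (M i) f).
Qed.

Definition dsum_module (k : fieldType) (C : Cat) (I : Type)
  (M : I -> ModData k C) : ModData k C :=
  {| mspace := fun x => dsum (fun i => mspace (M i) x);
     mmap := @dsum_map k C I M;
     mmap_lin := @dsum_map_lin k C I M |}.

(* F^{-1}(Q) inherits closure under identities and composition, and
   convexity, from Q; a connected component of a convex subcategory is again
   a subcategory, connected and convex, i.e. an interval.  As for modules,
   I_Q o F is the indicator module of F^{-1}(Q) itself, and the indicator
   module of a subcategory S splits along the components of S because a
   morphism of S never joins two different components. *)

From HB Require Import structures.
From mathcomp Require Import all_boot all_algebra.
From mathcomp Require Import boolp.
From Stdlib Require Import Relations.

Set Implicit Arguments.
Unset Strict Implicit.
Unset Printing Implicit Defensive.
Import GRing.Theory.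
Local Open Scope ring_scope.

(* Rows of length [b : bool] model the fibres of indicator modules: [k] when
   [b] is true, the zero space otherwise. *)
Section BoolRows.
Variable k : fieldType.

Definition brow_val (b : bool) (v : 'rV[k]_b) : k := \sum_(j < b) v 0 j.
Definition brow (b : bool) (a : k) : 'rV[k]_b := const_mx a.

Lemma brow_false_eq (b : bool) (w1 w2 : 'rV[k]_b) : b = false -> w1 = w2.
Proof. by move=> b0; move: w1 w2; rewrite b0 => w1 w2; rewrite !thinmx0. Qed.

Lemma eq_brow (b : bool) a1 a2 : (b -> a1 = a2) -> brow b a1 = brow b a2.
Proof. by case: b => [->|_] //; apply: brow_false_eq. Qed.

Lemma brow_valK (b : bool) (v : 'rV[k]_b) : brow b (brow_val v) = v.
Proof.
case: b v => v; last exact: brow_false_eq.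
apply/rowP => j; rewrite !mxE /brow_val big_ord1 (ord1 j).
by congr (v _ _); apply: val_inj.
Qed.

Lemma brow_valE (b : bool) a : brow_val (brow b a) = if b then a else 0.
Proof. by case: b; rewrite /brow_val ?big_ord1 ?big_ord0 // mxE. Qed.

Lemma brow_val0 (b : bool) : brow_val (0 : 'rV[k]_b) = 0.
Proof. by rewrite /brow_val big1 // => j _; rewrite mxE. Qed.

Lemma brow_val_lin (b : bool) a (u v : 'rV[k]_b) :
  brow_val (a *: u + v) = a * brow_val u + brow_val v.
Proof.
by rewrite /brow_val mulr_sumr -big_split; apply: eq_bigr => j _; rewrite !mxE.
Qed.

Lemma brow_lin (b : bool) a x y : brow b (a * x + y) = a *: brow b x + brow b y.
Proof. by apply/rowP => j; rewrite !mxE. Qed.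

Lemma brow_val_mul_pid (b b' c : bool) (v : 'rV[k]_b) :
  brow_val (v *m (if c then pid_mx 1 else 0 : 'M_(b, b'))) =
  if [&& c, b & b'] then brow_val v else 0.
Proof.
case: c; last by rewrite mulmx0 brow_val0.
case: b v => v; last by rewrite [v]thinmx0 mul0mx brow_val0.
case: b' => /=; last by rewrite /brow_val big_ord0.
by rewrite pid_mx_1 mulmx1.
Qed.

Lemma brow_mul_pid (b b' c : bool) a :
  brow b a *m (if c then pid_mx 1 else 0 : 'M_(b, b')) =
  brow b' (if [&& c, b & b'] then a else 0).
Proof. by rewrite -[LHS]brow_valK brow_val_mul_pid brow_valE; case: b c => [] []. Qed.

End BoolRows.

Lemma mod_iso_trans (k : fieldType) (C : Cat) (L M N : ModData k C) :
  mod_iso L M -> mod_iso M N -> mod_iso L N.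
Proof.
move=> [eta [eta_lin [eta_bij eta_nat]]] [eps [eps_lin [eps_bij eps_nat]]].
exists (fun x => eps x \o eta x); split; last split.
- by move=> x a u v /=; rewrite eta_lin eps_lin.
- by move=> x; apply: bij_comp.
- by move=> x y f v /=; rewrite eta_nat eps_nat.
Qed.

Section Preimage.
Variables (C D : Cat) (F : Functor C D) (Q : SubCol D).

Lemma preimage_subcategory : is_subcategory Q -> is_subcategory (preimage F Q).
Proof.
move=> [_ [Qid Qcomp]]; split; first by move=> x y f [Fx [Fy _]].
split; first by move=> x Fx; do 2?split => //=; rewrite fmor_id; apply: Qid.
move=> x y z f g [Fx [_ Ff]] [_ [Fz Fg]]; do 2?split => //=.
by rewrite fmor_comp; apply: Qcomp.
Qed.

Lemma preimage_convex : convex Q -> convex (preimage F Q).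
Proof.
move=> Qconv x y z a b Fx Fy [_ [_ Fba]]; rewrite /= fmor_comp in Fba.
by have [Fz [Fa Fb]] := Qconv _ _ _ _ _ Fx Fy Fba.
Qed.

Lemma pullback_interval_module_iso (k : fieldType) : is_subcategory Q ->
  mod_iso (pullback F (interval_module k Q))
          (interval_module k (preimage F Q)).
Proof.
move=> [Qends _]; exists (fun x v => v); split => //; split => [x|x y f v].
  by exists id.
rewrite /= /ind_map; have -> // : `[< smor (preimage F Q) f >] = `[< smor Q (fmor F f) >].
apply/asboolP/asboolP => [[_ [_ Ff]] // | Ff].
by have [Fx Fy] := Qends _ _ _ Ff.
Qed.

End Preimage.

Section Components.
Variables (C : Cat) (S : SubCol C).

Lemma zz_mor x y (f : Hom C x y) : smor S f -> zz S x y.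
Proof. by move=> Sf; apply: rst_step; exists f. Qed.

Lemma zz_component a b : zz S a b -> component S a = component S b.
Proof.
move=> ab; rewrite /component (_ : zz S a = zz S b) //.
apply: functional_extensionality_dep => y; apply: propext; split => ay.
- exact: rst_trans (rst_sym _ _ _ _ ab) ay.
- exact: rst_trans ab ay.
Qed.

Lemma zz_in_component x0 a b : zz S a b -> zz S x0 a -> zz (component S x0) a b.
Proof.
elim=> {a b} [a b [f Sf]|a|a b ba IH|a b c ab IH1 _ IH2] x0a.
- by apply: rst_step; exists f.
- exact: rst_refl.
- by apply/rst_sym/IH; apply: rst_trans x0a (rst_sym _ _ _ _ ba).
- by apply: rst_trans (IH1 x0a) (IH2 _); apply: rst_trans x0a ab.
Qed.

Hypothesis S_sub : is_subcategory S.

Lemma component_subcategory x0 : is_subcategory (component S x0).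
Proof.
have [Sends [Sid Scomp]] := S_sub; split.
  move=> y z f [Sf x0y]; have [Sy Sz] := Sends _ _ _ Sf.
  by do 2!split => //; apply: rst_trans x0y (zz_mor Sf).
split; first by move=> y [Sy x0y]; split => //; apply: Sid.
by move=> y z w f g [Sf x0y] [Sg _]; split => //; apply: Scomp.
Qed.

Lemma component_connected x0 : sobj S x0 -> connected (component S x0).
Proof.
move=> Sx0; split; first by exists x0; split => //; apply: rst_refl.
move=> y z [_ x0y] [_ x0z]; apply: (zz_in_component _ x0y).
exact: rst_trans (rst_sym _ _ _ _ x0y) x0z.
Qed.

Lemma component_convex x0 : convex S -> convex (component S x0).
Proof.
move=> Sconv x y z a b [Sx x0x] [Sy _] [Sba _].
have [Sz [Sa Sb]] := Sconv _ _ _ _ _ Sx Sy Sba.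
by have x0z := rst_trans _ _ _ _ _ x0x (zz_mor Sa); do 2!split.
Qed.

Lemma component_interval x0 :
  convex S -> sobj S x0 -> is_interval (component S x0).
Proof.
move=> Sconv Sx0; split; first exact: component_subcategory.
by split; [apply: component_connected | apply: component_convex].
Qed.

End Components.

Section ComponentSum.
Variables (k : fieldType) (C : Cat) (S : SubCol C).
Hypothesis S_sub : is_subcategory S.

Lemma components_val_inj (P1 P2 : components S) :
  proj1_sig P1 = proj1_sig P2 -> P1 = P2.
Proof.
case: P1 P2 => P1 h1 [P2 h2] /= P12; subst P2.
by congr exist; apply: Prop_irrelevance.
Qed.

Lemma components_sub (P : components S) x : sobj (proj1_sig P) x -> sobj S x.
Proof. by case: P => P [x0 [_ E]] /=; rewrite E => -[]. Qed.

Lemma components_at (P : components S) x : sobj (proj1_sig P) x ->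
  proj1_sig P = component S x.
Proof.
by case: P => P [x0 [_ E]] /=; rewrite E => -[_ x0x]; apply: zz_component.
Qed.

Definition component_of x (Sx : sobj S x) : components S :=
  exist _ (component S x) (ex_intro _ x (conj Sx erefl)).

Lemma component_of_at x (Sx : sobj S x) (P : components S) :
  sobj (proj1_sig P) x -> P = component_of Sx.
Proof. by move=> Px; apply: components_val_inj; rewrite (components_at Px). Qed.

Lemma asbool_components_false (P : components S) x :
  ~ sobj S x -> `[< sobj (proj1_sig P) x >] = false.
Proof. by move=> Sx; apply/negbTE/asboolP => /components_sub. Qed.

(* Only the component of [x] can carry a nonzero coordinate. *)
Lemma split_supp x (v : ind_space k S x) :
  fin_supp (fun P : components S =>
     brow `[< sobj (proj1_sig P) x >] (brow_val v) : ind_space k (proj1_sig P) x).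
Proof.
case: (pselect (sobj S x)) => Sx; last first.
  by exists nil => P []; apply: brow_false_eq; apply: asbool_components_false.
exists [:: component_of Sx] => P vP; left; apply/esym/component_of_at/asboolP.
by apply: contra_notT vP => /negbTE; apply: brow_false_eq.
Qed.

Definition split_components x (v : ind_space k S x) :
  dsum (fun P : components S => ind_space k (proj1_sig P) x) := DSum (split_supp v).

Lemma split_components_bij x : bijective (@split_components x).
Proof.
case: (pselect (sobj S x)) => Sx; last first.
  exists (fun _ => 0) => [v|w]; first by apply: brow_false_eq; apply/negbTE/asboolP.
  by apply: dsum_eq => P; apply: brow_false_eq; apply: asbool_components_false.
exists (fun w : dsum _ => brow _ (brow_val (w (component_of Sx))) : ind_space k S x)
  => [v|w] /=.
  rewrite brow_valE (_ : `[< sobj S x /\ zz S x x >] = true) ?brow_valK //.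
  by apply/asboolP; split => //; apply: rst_refl.
apply: dsum_eq => P /=; case: (pselect (sobj (proj1_sig P) x)) => Px; last first.
  by apply: brow_false_eq; apply/negbTE/asboolP.
by rewrite (component_of_at Sx Px) brow_valE (asboolT Sx) brow_valK.
Qed.

(* Within a component [P] containing [y], a morphism [f : x -> y] of [S] lies
   in [P], and then so does [x]. *)
Lemma component_mor_at (P : components S) x y (f : Hom C x y) :
  sobj (proj1_sig P) y ->
  [&& `[< smor S f >], `[< sobj S x >] & `[< sobj S y >]] =
  [&& `[< smor (proj1_sig P) f >], `[< sobj (proj1_sig P) x >]
    & `[< sobj (proj1_sig P) y >]].
Proof.
case: P => P [x0 [_ E]] /=; rewrite E => -[Sy x0y] /=.
apply/and3P/and3P => [[/asboolP Sf /asboolP Sx _]|[/asboolP [Sf _] _ _]].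
  have x0x := rst_trans _ _ _ _ _ x0y (rst_sym _ _ _ _ (zz_mor Sf)).
  by split; apply/asboolP.
by have [Sx _] := S_sub.1 _ _ _ Sf; split; apply/asboolP.
Qed.

Lemma interval_module_split_components :
  mod_iso (interval_module k S)
          (dsum_module (fun P : components S => interval_module k (proj1_sig P))).
Proof.
exists split_components; split.
  by move=> x a u v; apply: dsum_eq => P /=; rewrite brow_val_lin brow_lin.
split; first exact: split_components_bij.
move=> x y f v; apply: dsum_eq => P /=.
rewrite /ind_map brow_mul_pid brow_val_mul_pid.
by apply: eq_brow => /asboolP Py; rewrite (component_mor_at f Py).
Qed.

End ComponentSum.

Theorem lemma2p9 (k : fieldType) (C D : Cat) (F : Functor C D) (Q : SubCol D) :
  direct C -> direct D -> is_interval Q ->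
  is_subcategory (preimage F Q) /\
  (forall x, sobj (preimage F Q) x -> is_interval (component (preimage F Q) x)) /\
  mod_iso (pullback F (interval_module k Q))
          (dsum_module (fun P : components (preimage F Q) =>
                          interval_module k (proj1_sig P))).
Proof.
move=> _ _ [Q_sub [_ Q_conv]].
have S_sub := preimage_subcategory F Q_sub.
split => //; split.
  by move=> x; apply: component_interval S_sub x (preimage_convex (F := F) Q_conv).
apply: mod_iso_trans (pullback_interval_module_iso F k Q_sub) _.
exact: interval_module_split_components.
Qed.
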